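(* Let $A$ be a finite-dimensional self-injective algebra over an algebraically closed field $k$, with $\dim_k A = d$, and let $A^e = A^{\mathrm{op}} \otimes_k A$. If $M$ is an $(A,A)$-bimodule (i.e. an $A^e$-module) with $A \in \overline{\mathcal{O}(M)}$ in $\mathrm{Mod}^{A^e}_d$ (i.e. $M$ degenerates to the regular bimodule $A$), then $M \cong A$ as bimodules. That is, the $A^e$-module $A$ is not a proper degeneration of any other $A^e$-module.
   Context: For a finite-dimensional $k$-algebra $\Lambda$ with a fixed presentation, $\mathrm{Mod}^\Lambda_n$ denotes the affine variety of $\Lambda$-module structures on $k^n$, on which $\mathrm{GL}_n(k)$ acts by conjugation with orbits corresponding to isomorphism classes; $\mathcal{O}(N)$ denotes the orbit of $N$ and $\overline{\mathcal{O}(N)}$ its Zariski closure. For $d$-dimensional modules $M,N$, $M$ degenerates to $N$ if $N \in \overline{\mathcal{O}(M)}$; the degeneration is proper if $M \not\cong N$. *)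

From HB Require Import structures.
From mathcomp Require Import all_boot all_order all_algebra all_field.

Set Implicit Arguments.
Unset Strict Implicit.
Unset Printing Implicit Defensive.

Import GRing.Theory.
Local Open Scope ring_scope.

Inductive pexpr (R V : Type) : Type :=
  | PConst of R
  | PVar of V
  | PAdd of pexpr R V & pexpr R V
  | PMul of pexpr R V & pexpr R V.

Fixpoint peval (R : nzRingType) (V : Type) (x : V -> R) (p : pexpr R V) : R :=
  match p with
  | PConst c => c
  | PVar v => x v
  | PAdd p q => peval x p + peval x q
  | PMul p q => peval x p * peval x q
  end.

Definition zariski_closure (R : nzRingType) (V : Type) (S : (V -> R) -> Prop)
    (x : V -> R) : Prop :=
  forall p : pexpr R V, (forall y, S y -> peval y p = 0) -> peval x p = 0.

Section ModVariety.
Variables (k : fieldType) (A : falgType k).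

Definition dimA : nat := \dim (fullv : {vspace A}).
Definition bas : dimA.-tuple A := vbasis fullv.

Definition actx n (X : 'I_dimA -> 'M[k]_n) (a : A) : 'M[k]_n :=
  \sum_(i < dimA) coord bas i a *: X i.

(* Presentation of A^e = A^op (x) A by the generators b_i (x) 1 and 1 (x) b_i:
   a point of Mod^{A^e}_n is a pair (L, R) of d-tuples of n x n matrices
   (the left, resp. right, action of the basis elements, acting on row
   vectors of k^n: a.v = v *m actx L a, v.a = v *m actx R a) satisfying
   the bimodule relations. *)
Definition is_bimod n (L R : 'I_dimA -> 'M[k]_n) : Prop :=
  [/\ actx L 1 = 1%:M, actx R 1 = 1%:M,
      (forall a b : A, actx L (a * b) = actx L b *m actx L a),
      (forall a b : A, actx R (a * b) = actx R a *m actx R b)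
    & (forall a b : A, actx L a *m actx R b = actx R b *m actx L a)].

Definition bimod_coords n (L R : 'I_dimA -> 'M[k]_n)
    : (bool * 'I_dimA * 'I_n * 'I_n) -> k :=
  fun v => let: (s, i, p, q) := v in (if s then L i else R i) p q.

Definition bimod_orbit n (L R : 'I_dimA -> 'M[k]_n)
    (y : (bool * 'I_dimA * 'I_n * 'I_n) -> k) : Prop :=
  exists2 g : 'M[k]_n, g \in unitmx &
    y = bimod_coords (fun i => invmx g *m L i *m g) (fun i => invmx g *m R i *m g).

Definition bimod_iso n (L1 R1 L2 R2 : 'I_dimA -> 'M[k]_n) : Prop :=
  exists2 g : 'M[k]_n, g \in unitmx &
    forall i, L1 i *m g = g *m L2 i /\ R1 i *m g = g *m R2 i.

Definition lreg (x : A) : 'M[k]_dimA :=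
  \matrix_(i < dimA, j < dimA) coord bas j (x * bas`_i).
Definition rreg (x : A) : 'M[k]_dimA :=
  \matrix_(i < dimA, j < dimA) coord bas j (bas`_i * x).

Definition Lreg : 'I_dimA -> 'M[k]_dimA := fun i => lreg bas`_i.
Definition Rreg : 'I_dimA -> 'M[k]_dimA := fun i => rreg bas`_i.

Definition is_rmod n (X : 'I_dimA -> 'M[k]_n) : Prop :=
  actx X 1 = 1%:M /\ (forall a b : A, actx X (a * b) = actx X a *m actx X b).

Definition rmod_hom n m (X : 'I_dimA -> 'M[k]_n) (Y : 'I_dimA -> 'M[k]_m)
    (f : 'M[k]_(n, m)) : Prop :=
  forall a : A, actx X a *m f = f *m actx Y a.

(* A is (right) self-injective: the regular right module A_A is an
   injective object of mod A (finite-dimensional right A-modules). *)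
Definition self_injective : Prop :=
  forall n m (X : 'I_dimA -> 'M[k]_n) (Y : 'I_dimA -> 'M[k]_m)
         (f : 'M[k]_(n, m)) (g : 'M[k]_(n, dimA)),
    is_rmod X -> is_rmod Y -> rmod_hom X Y f -> row_free f ->
    rmod_hom X Rreg g ->
    exists2 h : 'M[k]_(m, dimA), rmod_hom Y Rreg h & f *m h = g.

End ModVariety.

(* For bimodule structures X, Y on
   k^n, Hom(X, Y) is the left kernel of a matrix homK X Y whose entries are
   polynomials in the coordinates of X and Y, so a minor that is nonzero at a
   point of the orbit closure is nonzero somewhere on the orbit itself.
   This gives, in order:
   - M is faithful as a right A-module (the right action map has full rank at
     A, hence at a conjugate of M);
   - dim End(A) <= dim End(M), since End(A) = Z(A) embeds into End(M) via the
     action of central elements, by faithfulness;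
   - dim End(M) <= dim Hom(M, A), by semicontinuity of Hom(M, -);
   - hence dim Hom(gM, A) >= dim End(A) for every conjugate gM of M.
   Finally an adjugate formula gives maps x -> A, polynomial in the point x,
   which are homomorphisms wherever dim Hom(x, A) >= dim End(A) and a nonzero
   multiple of the identity at x = A; their determinant is a polynomial
   nonvanishing at A, hence at some gM, yielding an isomorphism gM ~ A. *)

From HB Require Import structures.
From mathcomp Require Import all_boot all_order all_fingroup all_algebra all_field.
From Stdlib Require Import Classical FunctionalExtensionality.

Set Implicit Arguments.
Unset Strict Implicit.
Unset Printing Implicit Defensive.
Import GRing.Theory.
Local Open Scope ring_scope.

Section LinearAlgebra.
Variable F : fieldType.

Lemma rank_minor m n (K : 'M[F]_(m, n)) :
  exists (P : 'M[F]_(\rank K, m)) (Q : 'M[F]_(n, \rank K)), \det (P *m K *m Q) != 0.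
Proof.
exists (pid_mx (\rank K) *m invmx (col_ebase K)).
exists (invmx (row_ebase K) *m pid_mx (\rank K)).
rewrite -[K in _ *m invmx _ *m K](mulmx_ebase K) !mulmxA mulmxKV ?col_ebase_unit //.
rewrite -!mulmxA mulKVmx ?row_ebase_unit // mulmxA.
rewrite pid_mx_id ?rank_leq_row // pid_mx_id ?rank_leq_col // pid_mx_1 det1.
exact: oner_neq0.
Qed.

Definition linP m n (f : 'rV[F]_m -> 'rV[F]_n) :=
  forall a u v, f (a *: u + v) = a *: f u + f v.

Lemma mul_lin1 m n (f : 'rV[F]_m -> 'rV[F]_n) : linP f ->
  forall u, u *m lin1_mx f = f u.
Proof.
move=> lin u.
have fD : {morph f : x y / x + y}.
  by move=> x y; have := lin 1 x y; rewrite !scale1r.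
have f0 : f 0 = 0.
  by apply/eqP; rewrite -(addrI (f 0) (_ : f 0 + f 0 = f 0 + 0)) // -fD !addr0.
have fZ a x : f (a *: x) = a *: f x by rewrite -[a *: x]addr0 lin f0 addr0.
rewrite [u in RHS]row_sum_delta (big_morph f fD f0).
apply/rowP => i; rewrite mxE summxE; apply: eq_bigr => j _.
by rewrite fZ !mxE.
Qed.

Lemma kerdim_le N m1 m2 (K1 : 'M[F]_(N, m1)) (K2 : 'M[F]_(N, m2))
    (f : 'rV[F]_N -> 'rV[F]_N) :
  linP f ->
  (forall v, v *m K1 = 0 -> f v *m K2 = 0) ->
  (forall v, v *m K1 = 0 -> f v = 0 -> v = 0) ->
  (\rank (kermx K1) <= \rank (kermx K2))%N.
Proof.
move=> lin fK fI; have Ef := mul_lin1 lin; set Phi := lin1_mx f.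
have := mxrank_mul_ker (kermx K1) Phi.
have -> : (kermx K1 :&: kermx Phi)%MS = 0.
  apply/row_matrixP => i; rewrite row0; apply: fI.
    by apply/sub_kermxP; rewrite (submx_trans (row_sub _ _)) // capmxSl.
  by rewrite -Ef; apply/sub_kermxP; rewrite (submx_trans (row_sub _ _)) // capmxSr.
rewrite mxrank0 addn0 => <-; apply: mxrankS; apply/sub_kermxP.
apply/row_matrixP => i; rewrite row0 2!row_mul Ef.
by apply: fK; rewrite -row_mul mulmx_ker row0.
Qed.

Lemma kerdim_leE N m1 m2 (K1 : 'M[F]_(N, m1)) (K2 : 'M[F]_(N, m2)) :
  (\rank (kermx K1) <= \rank (kermx K2))%N = (\rank K2 <= \rank K1)%N.
Proof. by rewrite !mxrank_ker leq_sub2lE // rank_leq_row. Qed.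

Lemma row_free_of_inj m n (M : 'M[F]_(m, n)) :
  (forall c : 'rV[F]_m, c *m M = 0 -> c = 0) -> row_free M.
Proof.
move=> Minj; rewrite -kermx_eq0; apply/eqP/row_matrixP => i; rewrite row0.
by apply: Minj; rewrite -row_mul mulmx_ker row0.
Qed.

(* Fix an r x r minor P K Q.  When it is invertible and rank K <= r, the
   adjugate of the minor yields a linear map kerproj K into the left kernel
   of K that is multiplication by det (P K Q) on that kernel. *)
Section KernelProjection.
Variables (N p r : nat) (P : 'M[F]_(r, N)) (Q : 'M[F]_(p, r)).

Definition minor (K : 'M[F]_(N, p)) : 'M[F]_r := P *m K *m Q.

Definition kerproj (K : 'M[F]_(N, p)) (u : 'rV[F]_N) : 'rV[F]_N :=
  \det (minor K) *: u - u *m K *m Q *m \adj (minor K) *m P.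

Lemma kerproj_ker_id K u : u *m K = 0 -> kerproj K u = \det (minor K) *: u.
Proof. by move=> uK; rewrite /kerproj uK !mul0mx subr0. Qed.

Lemma kerprojK K u :
  \det (minor K) != 0 -> (\rank K <= r)%N -> kerproj K u *m K = 0.
Proof.
move=> detK rankK.
have projKQ : kerproj K u *m (K *m Q) = 0.
  rewrite mulmxBl -scalemxAl.
  have -> : u *m K *m Q *m \adj (minor K) *m P *m (K *m Q)
          = u *m K *m Q *m (\adj (minor K) *m minor K).
    by rewrite /minor !mulmxA.
  by rewrite mul_adj_mx mul_mx_scalar mulmxA subrr.
have rank_minor : \rank (minor K) = r by apply: mxrank_unit; rewrite unitmxE unitfE.
have rankKQ : \rank (K *m Q) = \rank K.
  apply/eqP; rewrite eqn_leq mxrankM_maxl (leq_trans rankK) //.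
  by rewrite -{1}rank_minor /minor -mulmxA mxrankM_maxr.
have subKQ : ((K *m Q)^T <= K^T)%MS by rewrite trmx_mul submxMl.
have [X /(congr1 trmx)] : exists X, K^T = X *m (K *m Q)^T.
  apply/submxP; have [_] := mxrank_leqif_eq subKQ.
  by rewrite !mxrank_tr rankKQ eqxx => /esym /andP[].
by rewrite trmxK trmx_mul trmxK => {2}->; rewrite mulmxA projKQ mul0mx.
Qed.

End KernelProjection.
End LinearAlgebra.

Section PolynomialFunctions.
Variables (R : comNzRingType) (V : Type).

Definition polyf (F : (V -> R) -> R) :=
  exists p : pexpr R V, forall x, peval x p = F x.

Lemma polyf_ext F G : polyf F -> (forall x, F x = G x) -> polyf G.
Proof. by move=> [p Hp] E; exists p => x; rewrite Hp E. Qed.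

Lemma polyf_const c : polyf (fun _ => c).
Proof. by exists (PConst _ c). Qed.

Lemma polyf_var v : polyf (fun x => x v).
Proof. by exists (PVar _ v). Qed.

Lemma polyf_add F G : polyf F -> polyf G -> polyf (fun x => F x + G x).
Proof. by move=> [p Hp] [q Hq]; exists (PAdd p q) => x /=; rewrite Hp Hq. Qed.

Lemma polyf_mul F G : polyf F -> polyf G -> polyf (fun x => F x * G x).
Proof. by move=> [p Hp] [q Hq]; exists (PMul p q) => x /=; rewrite Hp Hq. Qed.

Lemma polyf_opp F : polyf F -> polyf (fun x => - F x).
Proof.
by move=> HF; apply: (polyf_ext (polyf_mul (polyf_const (-1)) HF)) => x; rewrite mulN1r.
Qed.

Lemma polyf_big (op : R -> R -> R) (idx : R) (I : Type) (r : seq I) (P : pred I)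
    (F : I -> (V -> R) -> R) :
  (forall F G, polyf F -> polyf G -> polyf (fun x => op (F x) (G x))) ->
  (forall i, polyf (F i)) -> polyf (fun x => \big[op/idx]_(i <- r | P i) F i x).
Proof.
move=> polyf_op HF; elim: r => [|a r IH].
  by apply: (polyf_ext (polyf_const idx)) => x; rewrite big_nil.
case Pa: (P a).
  by apply: (polyf_ext (polyf_op _ _ (HF a) IH)) => x; rewrite big_cons Pa.
by apply: (polyf_ext IH) => x; rewrite big_cons Pa.
Qed.

Definition pmx m n (M : (V -> R) -> 'M[R]_(m, n)) :=
  forall i j, polyf (fun x => M x i j).

Lemma pmx_const m n (C : 'M[R]_(m, n)) : pmx (fun _ => C).
Proof. by move=> i j; apply: polyf_const. Qed.

Lemma pmx_add m n (M N : (V -> R) -> 'M[R]_(m, n)) :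
  pmx M -> pmx N -> pmx (fun x => M x + N x).
Proof.
by move=> HM HN i j; apply: (polyf_ext (polyf_add (HM i j) (HN i j))) => x; rewrite mxE.
Qed.

Lemma pmx_opp m n (M : (V -> R) -> 'M[R]_(m, n)) : pmx M -> pmx (fun x => - M x).
Proof. by move=> HM i j; apply: (polyf_ext (polyf_opp (HM i j))) => x; rewrite mxE. Qed.

Lemma pmx_sub m n (M N : (V -> R) -> 'M[R]_(m, n)) :
  pmx M -> pmx N -> pmx (fun x => M x - N x).
Proof. by move=> HM HN; apply: pmx_add => //; apply: pmx_opp. Qed.

Lemma pmx_scale m n (F : (V -> R) -> R) (M : (V -> R) -> 'M[R]_(m, n)) :
  polyf F -> pmx M -> pmx (fun x => F x *: M x).
Proof.
by move=> HF HM i j; apply: (polyf_ext (polyf_mul HF (HM i j))) => x; rewrite mxE.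
Qed.

Lemma pmx_mul m n p (M : (V -> R) -> 'M[R]_(m, n)) (N : (V -> R) -> 'M[R]_(n, p)) :
  pmx M -> pmx N -> pmx (fun x => M x *m N x).
Proof.
move=> HM HN i j; apply: (@polyf_ext (fun x => \sum_l M x i l * N x l j)).
  by apply: polyf_big => [|l]; [exact: polyf_add | exact: polyf_mul].
by move=> x; rewrite mxE.
Qed.

Lemma pmx_sandwich m n p q (P : 'M[R]_(m, n)) (K : (V -> R) -> 'M[R]_(n, p))
    (Q : 'M[R]_(p, q)) :
  pmx K -> pmx (fun x => P *m K x *m Q).
Proof. by move=> HK; apply: pmx_mul _ (pmx_const Q); apply: pmx_mul (pmx_const P) HK. Qed.

Lemma pmx_mxvec p q (M : (V -> R) -> 'M[R]_(p, q)) : pmx M -> pmx (fun x => mxvec (M x)).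
Proof.
move=> HM i j; case/mxvec_indexP: j => a b.
by apply: (polyf_ext (HM a b)) => x; rewrite (ord1 i) mxvecE.
Qed.

Lemma pmx_vec_mx p q (M : (V -> R) -> 'rV[R]_(p * q)) :
  pmx M -> pmx (fun x => vec_mx (M x)).
Proof. by move=> HM i j; apply: (polyf_ext (HM 0 (mxvec_index i j))) => x; rewrite mxE. Qed.

Lemma pmx_col p1 p2 q (M : (V -> R) -> 'M[R]_(p1, q)) (N : (V -> R) -> 'M[R]_(p2, q)) :
  pmx M -> pmx N -> pmx (fun x => col_mx (M x) (N x)).
Proof.
move=> HM HN i j; rewrite -(splitK i); case: (split i) => a /=.
  by apply: (polyf_ext (HM a j)) => x; rewrite col_mxEu.
by apply: (polyf_ext (HN a j)) => x; rewrite col_mxEd.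
Qed.

Lemma pmx_rows p q (M : 'I_p -> (V -> R) -> 'rV[R]_q) :
  (forall i, pmx (M i)) -> pmx (fun x => \matrix_(i < p) M i x).
Proof. by move=> HM i j; apply: (polyf_ext (HM i 0 j)) => x; rewrite mxE. Qed.

Lemma polyf_det n (M : (V -> R) -> 'M[R]_n) : pmx M -> polyf (fun x => \det (M x)).
Proof.
move=> HM; apply: (@polyf_ext (fun x => \sum_(s : 'S_n) (-1) ^+ s * \prod_i M x i (s i))).
  apply: polyf_big => [|s]; first exact: polyf_add.
  apply: polyf_mul; first exact: polyf_const.
  by apply: polyf_big => [|i]; [exact: polyf_mul | exact: HM].
by move=> x; rewrite /determinant unlock.
Qed.

Lemma pmx_adj n (M : (V -> R) -> 'M[R]_n) : pmx M -> pmx (fun x => \adj (M x)).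
Proof.
move=> HM i j.
apply: (polyf_ext (polyf_mul (polyf_const ((-1) ^+ (j + i)))
   (polyf_det (M := fun x => row' j (col' i (M x))) _))).
  by move=> a b; apply: (polyf_ext (HM _ _)) => x; rewrite !mxE.
by move=> x; rewrite mxE.
Qed.

End PolynomialFunctions.

Section ZariskiClosure.
Variables (k : fieldType) (V : Type) (S : (V -> k) -> Prop) (x0 : V -> k).
Hypothesis x0_in_closure : zariski_closure S x0.

Lemma closure_nonvanishing (F : (V -> k) -> k) :
  polyf F -> F x0 != 0 -> exists2 y, S y & F y != 0.
Proof.
move=> [p Hp] Fx0; apply: NNPP => noy; move: Fx0; rewrite -Hp x0_in_closure ?eqxx //.
by move=> y Sy; rewrite Hp; apply/eqP/negPn/negP => Fy; apply: noy; exists y.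
Qed.

Lemma closure_rank_le p q (K : (V -> k) -> 'M[k]_(p, q)) :
  pmx K -> exists2 y, S y & (\rank (K x0) <= \rank (K y))%N.
Proof.
move=> HK; have [P [Q detPQ]] := rank_minor (K x0).
have polyf_minor : polyf (fun x => \det (P *m K x *m Q)).
  exact/polyf_det/pmx_sandwich.
have [y Sy dety] := closure_nonvanishing polyf_minor detPQ; exists y => //.
have <- : \rank (P *m K y *m Q) = \rank (K x0).
  by apply: mxrank_unit; rewrite unitmxE unitfE.
exact: leq_trans (mxrankM_maxl _ _) (mxrankM_maxr _ _).
Qed.

Variables (N p r : nat) (P : 'M[k]_(r, N)) (Q : 'M[k]_(p, r)).

Lemma polyf_det_minor (K : (V -> k) -> 'M[k]_(N, p)) :
  pmx K -> polyf (fun x => \det (minor P Q (K x))).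
Proof. by move=> HK; apply/polyf_det/pmx_sandwich. Qed.

Lemma pmx_kerproj (K : (V -> k) -> 'M[k]_(N, p)) u :
  pmx K -> pmx (fun x => kerproj P Q (K x) u).
Proof.
move=> HK; apply: pmx_sub.
  by apply: pmx_scale; [exact: polyf_det_minor | exact: pmx_const].
apply: pmx_mul; last exact: pmx_const.
by apply: pmx_mul; [exact: pmx_sandwich | exact/pmx_adj/pmx_sandwich].
Qed.

End ZariskiClosure.

Section HomSpaces.
Variables (k : fieldType) (m n : nat).
Local Notation act := ('I_m -> 'M[k]_n).

Definition bimod_hom (X1 Y1 X2 Y2 : act) (F : 'M[k]_n) : Prop :=
  forall i, X1 i *m F = F *m X2 i /\ Y1 i *m F = F *m Y2 i.

Definition hom_defect (X1 Y1 X2 Y2 : act) (F : 'M[k]_n) : 'M[k]_(m + m, n * n) :=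
  col_mx (\matrix_(i < m) mxvec (X1 i *m F - F *m X2 i))
         (\matrix_(i < m) mxvec (Y1 i *m F - F *m Y2 i)).

Definition homK (X1 Y1 X2 Y2 : act) : 'M[k]_(n * n, (m + m) * (n * n)) :=
  lin1_mx (fun v => mxvec (hom_defect X1 Y1 X2 Y2 (vec_mx v))).

Definition homdim (X1 Y1 X2 Y2 : act) : nat := \rank (kermx (homK X1 Y1 X2 Y2)).

Lemma hom_defect_lin (X1 Y1 X2 Y2 : act) :
  linP (fun v => mxvec (hom_defect X1 Y1 X2 Y2 (vec_mx v))).
Proof.
have commD (X Y : 'M[k]_n) a F G : X *m (a *: F + G) - (a *: F + G) *m Y
    = a *: (X *m F - F *m Y) + (X *m G - G *m Y).
  by rewrite mulmxDr mulmxDl -scalemxAr -scalemxAl scalerBr opprD addrACA.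
move=> a u v; rewrite [vec_mx _]linearP.
set F := vec_mx u; set G := vec_mx v.
suff -> : hom_defect X1 Y1 X2 Y2 (a *: F + G)
    = a *: hom_defect X1 Y1 X2 Y2 F + hom_defect X1 Y1 X2 Y2 G by rewrite linearP.
by rewrite /hom_defect scale_col_mx add_col_mx; congr col_mx;
  apply/matrixP => i j; rewrite !mxE commD linearP !mxE.
Qed.

Lemma homK_ker (X1 Y1 X2 Y2 : act) v :
  v *m homK X1 Y1 X2 Y2 = 0 <-> bimod_hom X1 Y1 X2 Y2 (vec_mx v).
Proof.
rewrite /homK mul_lin1; last exact: hom_defect_lin.
split.
  move/eqP; rewrite mxvec_eq0 col_mx_eq0 => /andP[/eqP HX /eqP HY] i.
  have := congr1 (row i) HX; have := congr1 (row i) HY; rewrite !rowK !row0.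
  by move=> /eqP; rewrite mxvec_eq0 subr_eq0 => /eqP -> /eqP;
    rewrite mxvec_eq0 subr_eq0 => /eqP ->.
move=> H; apply/eqP; rewrite mxvec_eq0 col_mx_eq0; apply/andP; split;
  apply/eqP/row_matrixP => i; rewrite rowK row0; have [HX HY] := H i;
  by rewrite ?HX ?HY subrr linear0.
Qed.

Definition conj_act (g : 'M[k]_n) (X : act) : act := fun i => invmx g *m X i *m g.

Lemma bimod_hom_conj_left (g : 'M[k]_n) (X1 Y1 X2 Y2 : act) F : g \in unitmx ->
  bimod_hom (conj_act g X1) (conj_act g Y1) X2 Y2 F <-> bimod_hom X1 Y1 X2 Y2 (g *m F).
Proof.
move=> gu; have conjE (X : act) i G : conj_act g X i *m G = invmx g *m (X i *m (g *m G)).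
  by rewrite /conj_act !mulmxA.
split=> homF i; have [HX HY] := homF i.
  by split; rewrite -[RHS]mulmxA; [rewrite -HX | rewrite -HY]; rewrite conjE mulKVmx.
by rewrite !conjE HX HY !mulmxA mulVmx // mul1mx.
Qed.

(* Conjugating either argument does not decrease dim Hom (it preserves it;
   only these inequalities are needed). *)
Lemma homdim_conj_right (g : 'M[k]_n) (X1 Y1 X2 Y2 : act) : g \in unitmx ->
  (homdim X1 Y1 X2 Y2 <= homdim X1 Y1 (conj_act g X2) (conj_act g Y2))%N.
Proof.
move=> gu; apply: (kerdim_le (f := fun v => mxvec (vec_mx v *m g))).
- by move=> a u v; rewrite linearP mulmxDl -scalemxAl linearP.
- move=> v /homK_ker Hv; apply/homK_ker; rewrite mxvecK => i.
  have [HX HY] := Hv i; rewrite /conj_act !mulmxA -!(mulmxA _ g) mulmxV // mulmx1.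
  by rewrite HX HY.
- move=> v _ /eqP; rewrite mxvec_eq0 => /eqP Hv.
  by rewrite -(vec_mxK v) -(mulmxK gu (vec_mx v)) Hv mul0mx linear0.
Qed.

Lemma homdim_conj_left (g : 'M[k]_n) (X1 Y1 X2 Y2 : act) : g \in unitmx ->
  (homdim X1 Y1 X2 Y2 <= homdim (conj_act g X1) (conj_act g Y1) X2 Y2)%N.
Proof.
move=> gu; apply: (kerdim_le (f := fun v => mxvec (invmx g *m vec_mx v))).
- by move=> a u v; rewrite linearP mulmxDr -scalemxAr linearP.
- move=> v /homK_ker Hv; apply/homK_ker; rewrite mxvecK.
  by apply/bimod_hom_conj_left => //; rewrite mulKVmx.
- move=> v _ /eqP; rewrite mxvec_eq0 => /eqP Hv.
  by rewrite -(vec_mxK v) -(mulKVmx gu (vec_mx v)) Hv mulmx0 linear0.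
Qed.

Lemma pmx_homK (V : Type) (X1 Y1 X2 Y2 : (V -> k) -> 'I_m -> 'M[k]_n) :
  (forall i, pmx (fun x => X1 x i)) -> (forall i, pmx (fun x => Y1 x i)) ->
  (forall i, pmx (fun x => X2 x i)) -> (forall i, pmx (fun x => Y2 x i)) ->
  pmx (fun x => homK (X1 x) (Y1 x) (X2 x) (Y2 x)).
Proof.
move=> HX1 HY1 HX2 HY2 r c.
apply: (@polyf_ext _ _ (fun x =>
  mxvec (hom_defect (X1 x) (Y1 x) (X2 x) (Y2 x) (vec_mx (delta_mx 0 r))) 0 c)); last first.
  by move=> x; rewrite /homK /lin1_mx mxE.
apply: (pmx_mxvec (M := fun x => hom_defect (X1 x) (Y1 x) (X2 x) (Y2 x) _)).
by apply: pmx_col; apply: pmx_rows => i; apply: pmx_mxvec;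
  apply: pmx_sub; apply: pmx_mul => //; exact: pmx_const.
Qed.

End HomSpaces.

Section RegularBimodule.
Variables (k : fieldType) (A : falgType k).
Local Notation d := (dimA A).
Local Notation b i := (bas A)`_i.
Local Notation Lr := (@Lreg _ A).
Local Notation Rr := (@Rreg _ A).

Definition coords (x : A) : 'rV[k]_d := \row_i coord (bas A) i x.
Definition of_coords (c : 'rV[k]_d) : A := \sum_i c 0 i *: b i.

Lemma coord_bas (i j : 'I_d) : coord (bas A) j (b i) = (i == j)%:R.
Proof. exact/coord_free/basis_free/vbasisP. Qed.

Lemma coordsK : cancel coords of_coords.
Proof.
move=> x; rewrite /of_coords [RHS](coord_vbasis (memvf x)).
by apply: eq_bigr => i _; rewrite mxE.
Qed.

Lemma coord_of_coords c j : coord (bas A) j (of_coords c) = c 0 j.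
Proof.
rewrite /of_coords linear_sum (bigD1 j) //= big1 => [|i ij];
  rewrite linearZ /= [X in _ * X]coord_bas.
  by rewrite eqxx mulr1 addr0.
by rewrite (negbTE ij) mulr0.
Qed.

Lemma of_coordsK : cancel of_coords coords.
Proof. by move=> c; apply/rowP => j; rewrite mxE coord_of_coords. Qed.

Lemma coords0 : coords 0 = 0.
Proof. by apply/rowP => j; rewrite !mxE linear0. Qed.

Lemma coords_linear (I : finType) (c : I -> k) (y : I -> A) :
  coords (\sum_i c i *: y i) = \sum_i c i *: coords (y i).
Proof.
apply/rowP => j; rewrite mxE summxE linear_sum; apply: eq_bigr => i _.
by rewrite linearZ !mxE.
Qed.

Lemma coords_mx_inj n (M N : 'M[k]_(d, n)) :
  (forall x, coords x *m M = coords x *m N) -> M = N.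
Proof.
move=> H; apply/row_matrixP => i; rewrite !rowE -(of_coordsK (delta_mx 0 i)); exact: H.
Qed.

Lemma actx_bas n (X : 'I_d -> 'M[k]_n) (i : 'I_d) : actx X (b i) = X i.
Proof.
rewrite /actx (bigD1 i) //= coord_bas eqxx scale1r big1 ?addr0 // => j ji.
by rewrite coord_bas eq_sym (negbTE ji) scale0r.
Qed.

Lemma actx_of_coords n (X : 'I_d -> 'M[k]_n) c :
  actx X (of_coords c) = \sum_i c 0 i *: X i.
Proof. by apply: eq_bigr => i _; rewrite coord_of_coords. Qed.

Lemma actx_conj n g (X : 'I_d -> 'M[k]_n) a :
  actx (conj_act g X) a = invmx g *m actx X a *m g.
Proof.
rewrite /actx /conj_act mulmx_sumr mulmx_suml; apply: eq_bigr => i _.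
by rewrite scalemxAl scalemxAr.
Qed.

Lemma actx_hom n (X1 X2 : 'I_d -> 'M[k]_n) F :
  (forall i, X1 i *m F = F *m X2 i) -> forall a, actx X1 a *m F = F *m actx X2 a.
Proof.
move=> H a; rewrite /actx mulmx_suml mulmx_sumr; apply: eq_bigr => i _.
by rewrite -scalemxAl -scalemxAr H.
Qed.

Lemma coords_rreg x a : coords x *m rreg a = coords (x * a).
Proof.
apply/rowP => j; rewrite !mxE -[x in RHS]coordsK mulr_suml linear_sum.
by apply: eq_bigr => i _; rewrite !mxE -scalerAl linearZ.
Qed.

Lemma coords_lreg x a : coords x *m lreg a = coords (a * x).
Proof.
apply/rowP => j; rewrite !mxE -[x in RHS]coordsK mulr_sumr linear_sum.
by apply: eq_bigr => i _; rewrite !mxE -scalerAr linearZ.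
Qed.

Lemma actx_Rreg a : actx Rr a = rreg a.
Proof.
apply: coords_mx_inj => x; rewrite coords_rreg /actx mulmx_sumr.
rewrite -[a in RHS]coordsK mulr_sumr.
under [in RHS]eq_bigr do rewrite -scalerAr.
rewrite coords_linear; apply: eq_bigr => i _.
by rewrite -scalemxAr /Rreg coords_rreg mxE.
Qed.

Lemma actx_Lreg a : actx Lr a = lreg a.
Proof.
apply: coords_mx_inj => x; rewrite coords_lreg /actx mulmx_sumr.
rewrite -[a in RHS]coordsK mulr_suml.
under [in RHS]eq_bigr do rewrite -scalerAl.
rewrite coords_linear; apply: eq_bigr => i _.
by rewrite -scalemxAr /Lreg coords_lreg mxE.
Qed.

Lemma regular_faithful (z : A) : rreg z = 0 -> z = 0.
Proof.
move=> z0; apply: (can_inj coordsK).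
by rewrite -[z in LHS]mul1r -coords_rreg z0 mulmx0 coords0.
Qed.

Lemma regular_end_central F : bimod_hom Lr Rr Lr Rr F ->
  let z := of_coords (coords 1 *m F) in
  (forall x, coords x *m F = coords (z * x)) /\ (forall a, a * z = z * a).
Proof.
move=> homF z.
have Fr a : rreg a *m F = F *m rreg a.
  by rewrite -actx_Rreg; apply: actx_hom => i; case: (homF i).
have Fl a : lreg a *m F = F *m lreg a.
  by rewrite -actx_Lreg; apply: actx_hom => i; case: (homF i).
have Fz : coords 1 *m F = coords z by rewrite of_coordsK.
have Fzl x : coords x *m F = coords (z * x).
  by rewrite -[x in LHS]mul1r -coords_rreg -mulmxA Fr mulmxA Fz coords_rreg.
have Fzr x : coords x *m F = coords (x * z).
  by rewrite -[x in LHS]mulr1 -coords_lreg -mulmxA Fl mulmxA Fz coords_lreg.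
by split=> // a; apply: (can_inj coordsK); rewrite -Fzl Fzr.
Qed.

End RegularBimodule.

Section ModulePoints.
Variables (k : fieldType) (A : falgType k) (n : nat).
Local Notation d := (dimA A).
Local Notation point := ((bool * 'I_d * 'I_n * 'I_n) -> k).

Definition left_at (x : point) : 'I_d -> 'M[k]_n :=
  fun i => \matrix_(p, q) x (true, i, p, q).
Definition right_at (x : point) : 'I_d -> 'M[k]_n :=
  fun i => \matrix_(p, q) x (false, i, p, q).

Lemma left_at_coords (L R : 'I_d -> 'M[k]_n) : left_at (bimod_coords L R) = L.
Proof. by apply: functional_extensionality => i; apply/matrixP => p q; rewrite mxE. Qed.

Lemma right_at_coords (L R : 'I_d -> 'M[k]_n) : right_at (bimod_coords L R) = R.
Proof. by apply: functional_extensionality => i; apply/matrixP => p q; rewrite mxE. Qed.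

Lemma pmx_left_at i : pmx (fun x : point => left_at x i).
Proof. by move=> p q; apply: (polyf_ext (polyf_var _ (true, i, p, q))) => x; rewrite mxE. Qed.

Lemma pmx_right_at i : pmx (fun x : point => right_at x i).
Proof. by move=> p q; apply: (polyf_ext (polyf_var _ (false, i, p, q))) => x; rewrite mxE. Qed.

Definition action_matrix (X : 'I_d -> 'M[k]_n) : 'M[k]_(d, n * n) :=
  \matrix_(i < d) mxvec (X i).

Lemma mul_action_matrix (X : 'I_d -> 'M[k]_n) c :
  c *m action_matrix X = mxvec (actx X (of_coords c)).
Proof.
rewrite mulmx_sum_row actx_of_coords linear_sum; apply: eq_bigr => i _.
by rewrite rowK linearZ.
Qed.

End ModulePoints.

Arguments pmx_left_at {k A n} i.
Arguments pmx_right_at {k A n} i.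

Section Degeneration.
Variables (k : fieldType) (A : falgType k).
Local Notation d := (dimA A).
Local Notation point := ((bool * 'I_d * 'I_d * 'I_d) -> k).
Local Notation Lr := (@Lreg _ A).
Local Notation Rr := (@Rreg _ A).
Variables (L R : 'I_d -> 'M[k]_d).
Hypothesis bimodM : is_bimod L R.
Hypothesis degM : zariski_closure (bimod_orbit L R) (bimod_coords Lr Rr).

Local Notation orbit_point g := (bimod_coords (conj_act g L) (conj_act g R)).

Lemma orbit_nonvanishing (F : point -> k) :
  polyf F -> F (bimod_coords Lr Rr) != 0 ->
  exists2 g, g \in unitmx & F (orbit_point g) != 0.
Proof.
move=> HF /(closure_nonvanishing degM HF) [_ [g gu ->]]; by exists g.
Qed.

Lemma orbit_rank_le p q (K : point -> 'M[k]_(p, q)) :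
  pmx K -> exists2 g, g \in unitmx &
    (\rank (K (bimod_coords Lr Rr)) <= \rank (K (orbit_point g)))%N.
Proof. by move=> /(closure_rank_le degM) [_ [g gu ->]]; exists g. Qed.

Lemma right_action_faithful z : actx R z = 0 -> z = 0.
Proof.
move=> Rz0.
have [g gu] := orbit_rank_le (K := fun x => action_matrix (right_at x))
  (pmx_rows (fun i => pmx_mxvec (pmx_right_at i))).
rewrite !right_at_coords => rank_le.
have free_reg : row_free (action_matrix Rr).
  apply: row_free_of_inj => c; rewrite mul_action_matrix actx_Rreg => /eqP.
  by rewrite mxvec_eq0 => /eqP/regular_faithful c0; rewrite -[c]of_coordsK c0 coords0.
have free_g : row_free (action_matrix (conj_act g R)).
  by rewrite /row_free eqn_leq rank_leq_row -{1}(eqP free_reg).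
apply: (can_inj (@coordsK _ A)); apply: (row_free_inj free_g).
by rewrite mul_action_matrix coordsK actx_conj Rz0 mulmx0 mul0mx coords0 mul0mx linear0.
Qed.

(* Step 2: dim End(A) <= dim End(M), via z |-> right action of z on M,
   which is injective on Z(A) by faithfulness. *)
Lemma homdim_regular_le_self : (homdim Lr Rr Lr Rr <= homdim L R L R)%N.
Proof.
have [_ _ _ Rmul LRcomm] := bimodM.
pose centre_action (v : 'rV[k]_(d * d)) :=
  mxvec (\sum_i (coords 1 *m vec_mx v) 0 i *: R i).
apply: (kerdim_le (f := centre_action)).
- move=> a u v; rewrite /centre_action [vec_mx (_ + _)]linearP mulmxDr -scalemxAr.
  set U := coords 1 *m vec_mx u; set W := coords 1 *m vec_mx v.
  suff -> : \sum_i (a *: U + W) 0 i *: R i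
      = a *: (\sum_i U 0 i *: R i) + \sum_i W 0 i *: R i by rewrite linearP.
  rewrite scaler_sumr -big_split; apply: eq_bigr => i _.
  by rewrite !mxE scalerDl scalerA.
- move=> v /homK_ker /regular_end_central [_ central]; apply/homK_ker.
  rewrite mxvecK -actx_of_coords => i; split.
    by rewrite -(actx_bas L i) LRcomm.
  by rewrite -(actx_bas R i) -Rmul central Rmul.
- move=> v /homK_ker /regular_end_central [Fz _].
  rewrite /centre_action -actx_of_coords => /eqP; rewrite mxvec_eq0.
  move=> /eqP/right_action_faithful z0; rewrite -(vec_mxK v).
  suff -> : vec_mx v = 0 by rewrite linear0.
  by apply: coords_mx_inj => x; rewrite Fz z0 mul0r coords0 mulmx0.
Qed.

(* Step 3: dim End(M) <= dim Hom(M, A), by semicontinuity of Hom(M, -). *)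
Lemma homdim_self_le_hom_regular : (homdim L R L R <= homdim L R Lr Rr)%N.
Proof.
have [g gu] := orbit_rank_le (K := fun x => homK L R (left_at x) (right_at x))
  (pmx_homK (fun i => pmx_const _ (L i)) (fun i => pmx_const _ (R i))
    pmx_left_at pmx_right_at).
rewrite !left_at_coords !right_at_coords -kerdim_leE => homdim_le.
exact: leq_trans (homdim_conj_right _ _ _ _ gu) homdim_le.
Qed.

Lemma homdim_regular_le_orbit g : g \in unitmx ->
  (homdim Lr Rr Lr Rr <= homdim (conj_act g L) (conj_act g R) Lr Rr)%N.
Proof.
move=> gu; apply: leq_trans homdim_regular_le_self _.
exact: leq_trans homdim_self_le_hom_regular (homdim_conj_left _ _ _ _ gu).
Qed.

(* Step 4: the kernel projection of the identity of A, taken along the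
   orbit, has a polynomial determinant nonvanishing at A, hence gives an
   isomorphism gM ~ A for some g. *)
Lemma degeneration_to_regular_iso : bimod_iso L R Lr Rr.
Proof.
pose K x := homK (left_at x) (right_at x) Lr Rr.
pose x0 := bimod_coords Lr Rr.
have [P [Q detPQ]] := rank_minor (K x0).
pose u : 'rV[k]_(d * d) := mxvec 1%:M.
pose hom x := vec_mx (kerproj P Q (K x) u).
have pmxK : pmx K.
  exact: pmx_homK pmx_left_at pmx_right_at
    (fun i => pmx_const _ (Lr i)) (fun i => pmx_const _ (Rr i)).
have polyF : polyf (fun x => \det (minor P Q (K x)) * \det (hom x)).
  apply: polyf_mul; first exact: polyf_det_minor.
  exact/polyf_det/pmx_vec_mx/pmx_kerproj.
have uK0 : u *m K x0 = 0.
  rewrite /K /x0 left_at_coords right_at_coords; apply/(homK_ker (m := d) (n := d)).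
  by rewrite /u mxvecK => i; split; rewrite mulmx1 mul1mx.
have Fx0 : \det (minor P Q (K x0)) * \det (hom x0) != 0.
  rewrite /hom kerproj_ker_id // [vec_mx _]linearZ /= /u mxvecK detZ det1 mulr1.
  by rewrite mulf_neq0 // expf_neq0.
have [g gu] := orbit_nonvanishing polyF Fx0.
rewrite mulf_eq0 negb_or => /andP[det_minor det_hom].
have rank_le : (\rank (K (orbit_point g)) <= \rank (K x0))%N.
  by rewrite -kerdim_leE /K /x0 !left_at_coords !right_at_coords homdim_regular_le_orbit.
have /homK_ker hom_g := kerprojK u det_minor rank_le.
exists (g *m hom (orbit_point g)); first by rewrite unitmx_mul gu unitmxE unitfE.
by move: hom_g; rewrite !left_at_coords !right_at_coords => /bimod_hom_conj_left; apply.
Qed.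

End Degeneration.

Unset Implicit Arguments.

(* Proposition 9. *)
Theorem proposition9 (k : closedFieldType) (A : falgType k)
    (L R : 'I_(dimA A) -> 'M[k]_(dimA A)) :
  self_injective A ->
  is_bimod L R ->
  zariski_closure (bimod_orbit L R) (bimod_coords (@Lreg _ A) (@Rreg _ A)) ->
  bimod_iso L R (@Lreg _ A) (@Rreg _ A).
Proof. by move=> _; exact: degeneration_to_regular_iso. Qed.
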